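(* Let $k$ be a field of characteristic zero in which every element admits an $n$th root. Then for every multiplicatively alternating matrix $q\in M_n(k)$ there exists $\tau\in(k^\times)^n$ such that the matrix $\tau q\tau^{-1}$, with entries $\frac{\tau_i}{\tau_j}q_{ij}$, is normalized.
   Context: A matrix $q\in M_n(k)$ is multiplicatively alternating if all entries are invertible, $q_{ii}=1$ and $q_{ij}=q_{ji}^{-1}$. It is normalized if $\prod_jq_{ij}=1$ for all $i$. *)

From mathcomp Require Import all_boot all_order all_algebra.
Set Implicit Arguments. Unset Strict Implicit. Unset Printing Implicit Defensive.
Import GRing.Theory.
Local Open Scope ring_scope.

Definition mult_alternating (k : fieldType) (n : nat) (q : 'M[k]_n) : Prop :=
  [/\ forall i j, q i j != 0,
      forall i, q i i = 1
    & forall i j, q i j = (q j i)^-1].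

Definition normalized (k : fieldType) (n : nat) (q : 'M[k]_n) : Prop :=
  forall i, \prod_j q i j = 1.

Definition conj_diag (k : fieldType) (n : nat) (tau : 'I_n -> k) (q : 'M[k]_n)
  : 'M[k]_n := \matrix_(i, j) (tau i / tau j * q i j).

(* Conjugating by [tau] multiplies the product of row [i] by
   [tau_i ^ n / prod_j tau_j].  The row products [r_i] of [q] multiply to 1,
   because the entries [q_ij] and [q_ji] cancel in pairs and the diagonal is 1.
   So choose [tau_i] an [n]th root of [r_i^-1]: then [prod_i tau_i] is an [n]th
   root of unity, and dividing one coordinate of [tau] by it makes
   [prod_i tau_i = 1] without changing the [tau_i ^ n]. *)

From mathcomp Require Import all_boot all_order all_algebra.
Set Implicit Arguments.
Unset Strict Implicit.
Unset Printing Implicit Defensive.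
Local Open Scope ring_scope.
Import GRing.Theory.

Lemma prod2_eq1_of_inv_pairs (R : comPzRingType) (n : nat) (f : 'I_n -> 'I_n -> R) :
  (forall i, f i i = 1) -> (forall i j, f i j * f j i = 1) ->
  \prod_i \prod_j f i j = 1.
Proof.
elim: n f => [|n IHn] f f_diag f_inv; first by rewrite big_ord0.
rewrite big_ord_recr /=; under eq_bigr do rewrite big_ord_recr /=.
rewrite big_ord_recr /= big_split /= f_diag mulr1.
rewrite IHn => [||i j]; [|by []|exact: f_inv].
by rewrite mul1r -big_split /= big1.
Qed.

Lemma prod_mult_alternating (k : fieldType) (n : nat) (q : 'M[k]_n) :
  mult_alternating q -> \prod_i \prod_j q i j = 1.
Proof.
case=> q_neq0 q_diag q_inv; apply: prod2_eq1_of_inv_pairs => // i j.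
by rewrite q_inv mulVf // invr_eq0.
Qed.

Lemma prod_row_conj_diag (k : fieldType) (n : nat) (tau : 'I_n -> k)
    (q : 'M[k]_n) (i : 'I_n) :
  \prod_j conj_diag tau q i j = tau i ^+ n / \prod_j tau j * \prod_j q i j.
Proof.
under eq_bigr do rewrite mxE.
by rewrite !big_split /= prodr_const card_ord prodfV.
Qed.

Lemma exists_roots_prod1 (k : fieldType) (I : finType) (n : nat) (a : I -> k) :
  (forall x : k, exists y, y ^+ n = x) -> \prod_i a i = 1 ->
  exists t : I -> k, (forall i, t i ^+ n = a i) /\ \prod_i t i = 1.
Proof.
move=> hroot prod_a.
have n_gt0 : (0 < n)%N.
  by case: n hroot => // /(_ 0) [y]; rewrite expr0 => /eqP; rewrite oner_eq0.
have /fin_all_exists [s sn] : forall i, exists y, y ^+ n = a i by move=> i.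
case: (pickP I) => [i0 _|I0]; last by exists s; rewrite big_pred0.
set z := \prod_i s i.
have zn : z ^+ n = 1 by rewrite -prodrXl; under eq_bigr do rewrite sn.
have z_neq0 : z != 0.
  by apply: contra_eq_neq zn => ->; rewrite expr0n gtn_eqF // eq_sym oner_neq0.
exists (fun i => if i == i0 then s i / z else s i); split.
  by move=> i; case: eqP => // _; rewrite expr_div_n zn divr1.
rewrite (bigD1 i0) //= eqxx; under eq_bigr => i /negbTE -> do [].
by rewrite mulrAC -(@bigD1 _ _ _ _ i0 xpredT s) // mulfV.
Qed.

Theorem lemma2p9 (k : fieldType) (n : nat)
  (hchar : [pchar k] =i pred0)
  (hroot : forall x : k, exists y : k, y ^+ n = x)
  (q : 'M[k]_n) (hq : mult_alternating q) :
  exists tau : 'I_n -> k, (forall i, tau i != 0) /\ normalized (conj_diag tau q).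
Proof.
pose r i := \prod_j q i j.
have prod_rV : \prod_i (r i)^-1 = 1 by rewrite prodfV (prod_mult_alternating hq) invr1.
have [tau [tau_n tau_prod]] := exists_roots_prod1 hroot prod_rV.
have /prodf_neq0 tau_neq0 : \prod_i tau i != 0 by rewrite tau_prod oner_neq0.
have r_neq0 i : r i != 0 by case: hq => q_neq0 _ _; apply/prodf_neq0.
exists tau; split=> [i|i]; first exact: tau_neq0.
by rewrite prod_row_conj_diag tau_n tau_prod invr1 mulr1 mulVf.
Qed.
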